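(* Let $p,q\in\mathbb{N}$ be co-prime with $p/q\in[0,1]$. For $n\ge2$ let $Z_n=\{z\in B^n:\ p\sum_{i=1}^n\alpha_i2^{-i}-q\sum_{i=1}^n\beta_i2^{-i}=0\}$, where $z_i=(\alpha_i,\beta_i)$. Then $$\log\frac{\mathcal{N}_n(D,D')}{\mathcal{N}_{n-1}(D,D')}\le\sum_{x\in Z_n}\sup_{y\in[x]}\phi(y).$$
   Context: $D=\{0,1,p/q\}$, $D'=\{\frac{x+i}{2}:i\in D\}$, and $\mathcal{N}_n(D,D')$ is the number of pairs $(a,b)\in D^n\times D^n$ with $\sum_{i=1}^na_i2^{-i}=\sum_{i=1}^nb_i2^{-i}$ (equivalently $F_a=F_b$ where $F_a=F_{a_1}\circ\cdots\circ F_{a_n}$, $F_i(x)=\frac{x+i}2$). $B=\{(0,0),(1,0),(0,1),(1,1)\}$, ordered this way to index rows/columns $1,\dots,4$; for $x\in B^n$, $[x]=\{\omega\in B^{\mathbb{N}}:\omega_1\cdots\omega_n=x\}$. The matrices are $A_{(0,0)}=\begin{pmatrix}3&1&1&1\\0&1&0&0\\0&0&1&0\\0&0&0&1\end{pmatrix}$, $A_{(1,0)}=\begin{pmatrix}1&0&1&0\\1&3&0&1\\0&0&0&0\\0&0&1&1\end{pmatrix}$, $A_{(0,1)}=\begin{pmatrix}1&1&0&0\\0&0&0&0\\1&0&3&1\\0&1&0&1\end{pmatrix}$, $A_{(1,1)}=\begin{pmatrix}1&0&0&0\\0&1&0&0\\0&0&1&0\\1&1&1&3\end{pmatrix}$,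 and for $z\in B^{\mathbb{N}}$, $$\phi(z)=\limsup_{n\to\infty}\log\frac{(1,1,1,1)A_{z_1}A_{z_2}\cdots A_{z_n}(1,0,0,0)^T}{(1,1,1,1)A_{z_2}A_{z_3}\cdots A_{z_n}(1,0,0,0)^T}.$$ *)

From HB Require Import structures.
From mathcomp Require Import all_boot all_order all_algebra.
From mathcomp Require Import all_classical all_reals all_analysis.
Set Implicit Arguments. Unset Strict Implicit. Unset Printing Implicit Defensive.
Import Order.TTheory GRing.Theory Num.Theory.
Local Open Scope ring_scope.

(* The digit set D = {0, 1, p/q} (as a set of rationals; duplicates are
   irrelevant since seq_sub is the subtype {x | x \in s}). *)
Definition digits (p q : nat) : seq rat := [:: 0; 1; p%:Q / q%:Q].
Definition Dt (p q : nat) := seq_sub (digits p q).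

(* value sum_{i=1}^n a_i 2^{-i}, with a_{i+1} stored at index i *)
Definition dval (p q n : nat) (a : {ffun 'I_n -> Dt p q}) : rat :=
  \sum_(i < n) ssval (a i) * (2%:Q ^- i.+1).

Definition NN (p q n : nat) : nat :=
  #|[set ab : {ffun 'I_n -> Dt p q} * {ffun 'I_n -> Dt p q}
       | dval ab.1 == dval ab.2]|.

(* B = {0,1}^2; (alpha, beta) = (z.1, z.2).
   Order (0,0),(1,0),(0,1),(1,1) indexes rows/columns 0..3. *)
Definition B := (bool * bool)%type.

Definition Amat (R : realType) (z : B) : 'M[R]_4 :=
  match z with
  | (false, false) => \matrix_(i < 4, j < 4)
      nth 0 (nth [::] [:: [:: 3; 1; 1; 1]; [:: 0; 1; 0; 0];
                          [:: 0; 0; 1; 0]; [:: 0; 0; 0; 1]] i) j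
  | (true, false) => \matrix_(i < 4, j < 4)
      nth 0 (nth [::] [:: [:: 1; 0; 1; 0]; [:: 1; 3; 0; 1];
                          [:: 0; 0; 0; 0]; [:: 0; 0; 1; 1]] i) j
  | (false, true) => \matrix_(i < 4, j < 4)
      nth 0 (nth [::] [:: [:: 1; 1; 0; 0]; [:: 0; 0; 0; 0];
                          [:: 1; 0; 3; 1]; [:: 0; 1; 0; 1]] i) j
  | (true, true) => \matrix_(i < 4, j < 4)
      nth 0 (nth [::] [:: [:: 1; 0; 0; 0]; [:: 0; 1; 0; 0];
                          [:: 0; 0; 1; 0]; [:: 1; 1; 1; 3]] i) j
  end.

Definition colsum0 (R : realType) (M : 'M[R]_4) : R := \sum_(j < 4) M j 0.

(* A_{z_{m+1}} ... A_{z_n}  (z_k stored at index k-1) *)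
Definition Aprod (R : realType) (z : nat -> B) (m n : nat) : 'M[R]_4 :=
  \big[mulmx/1%:M]_(m <= i < n) Amat R (z i).

Definition phi (R : realType) (z : nat -> B) : \bar R :=
  limn_esup (fun n => (ln (colsum0 (Aprod R z 0 n) / colsum0 (Aprod R z 1 n)))%:E).

Definition cyl (n : nat) (x : {ffun 'I_n -> B}) : set (nat -> B) :=
  [set w | forall i : 'I_n, w i = x i].

Definition Zset (p q n : nat) : {set {ffun 'I_n -> B}} :=
  [set x : {ffun 'I_n -> B} |
     p%:Q * (\sum_(i < n) (nat_of_bool (x i).1)%:Q * (2%:Q ^- i.+1))
     - q%:Q * (\sum_(i < n) (nat_of_bool (x i).2)%:Q * (2%:Q ^- i.+1)) == 0].

From HB Require Import structures.
From mathcomp Require Import all_boot all_order all_algebra.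
From mathcomp Require Import all_classical all_reals all_analysis.
From mathcomp Require Import zify ring lra.
Import Order.TTheory GRing.Theory Num.Theory.
Set Implicit Arguments. Unset Strict Implicit. Unset Printing Implicit Defensive.
Local Open Scope ring_scope.

(* Each column of every matrix A_z sums to at least 2, so phi >= log 2
   everywhere; and (1,0,0,0)^T is an eigenvector of A_(0,0) for the eigenvalue
   3, so phi = log 3 on the all-zero sequence, whose prefix lies in every Z_n.
   It therefore suffices to show N_n <= 3 N_(n-1) when 2^n <= q, and
   N_n <= 6 N_(n-1) otherwise; in the latter case the binary expansions of
   q / 2^n and p / 2^n give a second, nonzero word of Z_n.

   Splitting off the first digits, N_n is the sum over d, d' in D of S(d' - d),
   where S(t) counts the pairs of words of length n - 1 whose values differ by
   t.  Now S(0) = N_(n-1), S(1) = S(-1) = 0 since values lie in [0, 1), and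
   S(t) + S(t - 1) <= N_(n-1) for 0 <= t <= 1 by Cauchy-Schwarz over the fibres
   of the value map, which gives N_n <= 5 N_(n-1).  If moreover 2^n <= q, the
   four remaining terms vanish: q 2^(n-1) times a value has the form q u + p x
   with x < 2^(n-1), and as p and q are coprime no two such numbers differ by
   2^(n-1) (p - j q). *)

Definition binsum m (c : 'I_m -> rat) : rat := \sum_(i < m) c i * 2%:Q ^- i.+1.

Lemma binsum_recl m (c : 'I_m.+1 -> rat) :
  binsum c = (c ord0 + binsum (fun i => c (lift ord0 i))) / 2.
Proof.
rewrite /binsum big_ord_recl mulrDl mulr_suml expr1; congr (_ + _).
apply: eq_bigr => i _; rewrite lift0 exprS invfM.
by rewrite mulrCA mulrC.
Qed.

Lemma binsum_ge0_lt1 m (c : 'I_m -> rat) :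
  (forall i, 0 <= c i <= 1) -> 0 <= binsum c < 1.
Proof.
elim: m c => [|m IHm] c c01; first by rewrite /binsum big_ord0 ltr01 lexx.
rewrite binsum_recl.
have /andP[c0 c1] := c01 ord0.
have /andP[s0 s1] := IHm _ (fun i => c01 (lift ord0 i)).
apply/andP; split; lra.
Qed.

Lemma binsum_bits n k : (k < 2 ^ n)%N ->
  exists b : 'I_n -> bool, binsum (fun i => (b i)%:R) = k%:R / 2 ^+ n.
Proof.
elim: n k => [|n IHn] k.
  by rewrite expn0 ltnS leqn0 => /eqP->; exists (fun=> false); rewrite /binsum big_ord0 mul0r.
rewrite expnS => hk; pose b0 := (2 ^ n <= k)%N.
have [b' Eb'] : exists b' : 'I_n -> bool,
    binsum (fun i => (b' i)%:R) = (k - b0 * 2 ^ n)%N%:R / 2 ^+ n.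
  by apply: IHn; rewrite /b0; case: leqP; lia.
exists (fun i => if unlift ord0 i is Some j then b' j else b0).
rewrite binsum_recl unlift_none.
under eq_fun do rewrite liftK.
have pow2_neq0 : (2 : rat) ^+ n != 0 by rewrite expf_neq0.
rewrite Eb' natrB ?natrM ?natrX; last by rewrite /b0; case: leqP; lia.
by rewrite exprS; field.
Qed.

Section FfunCons.

Variables (T : finType) (m : nat).

Definition ffcons (x : T) (a : {ffun 'I_m -> T}) : {ffun 'I_m.+1 -> T} :=
  [ffun i => if unlift ord0 i is Some j then a j else x].

Definition ffbehead (a : {ffun 'I_m.+1 -> T}) : {ffun 'I_m -> T} :=
  [ffun j => a (lift ord0 j)].

Lemma ffcons0 x a : ffcons x a ord0 = x.
Proof. by rewrite ffunE unlift_none. Qed.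

Lemma ffconsK x : cancel (ffcons x) ffbehead.
Proof. by move=> a; apply/ffunP => j; rewrite !ffunE liftK. Qed.

Lemma ffbeheadK (a : {ffun 'I_m.+1 -> T}) : ffcons (a ord0) (ffbehead a) = a.
Proof. by apply/ffunP => i; rewrite !ffunE; case: unliftP => [j ->|->]; rewrite ?ffunE. Qed.

Lemma big_ffun_cons (R : Type) (idx : R) (op : Monoid.com_law idx)
    (F : {ffun 'I_m.+1 -> T} -> R) :
  \big[op/idx]_a F a = \big[op/idx]_x \big[op/idx]_a F (ffcons x a).
Proof.
rewrite pair_big (reindex (fun xa : T * _ => ffcons xa.1 xa.2)) //=.
exists (fun a : {ffun 'I_m.+1 -> T} => (a ord0, ffbehead a)) => [[x a] _ | a _] /=.
  by rewrite ffcons0 ffconsK.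
exact: ffbeheadK.
Qed.

End FfunCons.

Lemma card_pairs (T : finType) (P : T -> T -> bool) :
  #|[set ab : T * T | P ab.1 ab.2]| = (\sum_a \sum_b P a b)%N.
Proof.
rewrite -sum1dep_card pair_big big_mkcond /=.
by apply: eq_bigr => -[a b] _; case: (P a b).
Qed.

Section Fibres.

Variables (T : finType) (V : eqType) (f : T -> V).

Definition fibre_card (v : V) : nat := #|[pred t | f t == v]|.

Definition values : seq V := undup (codom f).

Lemma sum_by_values (F : V -> nat) :
  (\sum_t F (f t) = \sum_(v <- values) fibre_card v * F v)%N.
Proof.
under [RHS]eq_bigr => v _.
  rewrite /fibre_card -sum1_card big_distrl big_mkcond /=.
  under eq_bigr => t _ do rewrite inE mul1n.
  over.
rewrite exchange_big /=; apply: eq_bigr => t _.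
rewrite (bigD1_seq (f t)) ?undup_uniq ?mem_undup ?codom_f //= eqxx big1 ?addn0 //.
by move=> v; rewrite eq_sym => /negPf ->.
Qed.

Lemma card_graph_pairs (h : V -> V) :
  #|[set ab : T * T | f ab.1 == h (f ab.2)]| =
  (\sum_(v <- values) fibre_card v * fibre_card (h v))%N.
Proof.
rewrite (card_pairs (fun a b => f a == h (f b))) exchange_big /= -sum_by_values.
apply: eq_bigr => b _; rewrite /fibre_card -sum1_card [RHS]big_mkcond.
by apply: eq_bigr => a _; rewrite inE; case: (_ == _).
Qed.

Lemma sum_fibre_card_sqr_le (g : V -> V) : {in values &, injective g} ->
  (\sum_(v <- values) fibre_card (g v) * fibre_card (g v) <=
   \sum_(v <- values) fibre_card v * fibre_card v)%N.
Proof.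
move=> g_inj; rewrite -sum_by_values.
have hits_le1 w : (\sum_(v <- values) (g v == w) <= 1)%N.
  have -> : (\sum_(v <- values) (g v == w) = \sum_(v <- values | g v == w) 1)%N.
    by rewrite [RHS]big_mkcond.
  rewrite sum1_count -(count_map g (pred1 w)).
  by rewrite count_uniq_mem ?map_inj_in_uniq ?undup_uniq ?leq_b1.
have sqr_hits v : (fibre_card (g v) * fibre_card (g v) =
    \sum_t (g v == f t) * fibre_card (f t))%N.
  rewrite {1}/fibre_card -sum1_card big_distrl big_mkcond /=.
  by apply: eq_bigr => t _; rewrite inE eq_sym; case: eqP => [->|_].
under eq_bigr do rewrite sqr_hits.
rewrite exchange_big /=; apply: leq_sum => t _.
by rewrite -big_distrl /= -[leqRHS]mul1n leq_mul2r hits_le1 orbT.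
Qed.

Lemma card_graph_pairs_le (g : V -> V) : {in values &, injective g} ->
  (#|[set ab : T * T | f ab.1 == g (f ab.2)]| <=
   #|[set ab : T * T | f ab.1 == f ab.2]|)%N.
Proof.
move=> g_inj; rewrite (card_graph_pairs g) (card_graph_pairs id) -leq_double -!addnn -big_split /=.
apply: (@leq_trans (\sum_(v <- values)
    (fibre_card v * fibre_card v + fibre_card (g v) * fibre_card (g v)))).
  apply: leq_sum => v _; rewrite addnn -mul2n.
  by have [+ _] := nat_Cauchy (fibre_card v) (fibre_card (g v)); rewrite !expnS !expn0 !muln1.
by rewrite big_split leq_add2l sum_fibre_card_sqr_le.
Qed.

End Fibres.

Lemma sum_seq_sub_le (T : choiceType) (s : seq T) (F : T -> nat) :
  (\sum_(d : seq_sub s) F (ssval d) <= \sum_(x <- s) F x)%N.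
Proof.
rewrite -(big_map (@ssval _ s) xpredT) (sub_le_big_seq leqnn (fun x y => leq_addr y x)) // => x.
rewrite count_uniq_mem ?map_inj_uniq ?index_enum_uniq //; last exact: val_inj.
case: mapP => // -[y _ ->]; by rewrite -has_count has_pred1 ssvalP.
Qed.

Section Digits.

Variables p q : nat.

Local Notation r := (p%:Q / q%:Q).
Local Notation word m := {ffun 'I_m -> Dt p q}.

Definition NN_shift m (t : rat) : nat :=
  #|[set ab : word m * word m | dval ab.1 == dval ab.2 + t]|.

Lemma NN_shift0 m : NN_shift m 0 = NN p q m.
Proof. by apply: eq_card => ab; rewrite !inE addr0. Qed.

Lemma dval_cons m (d : Dt p q) (a : word m) :
  dval (ffcons d a) = (ssval d + dval a) / 2.
Proof.
rewrite [LHS](_ : _ = binsum (fun i => ssval (ffcons d a i))) // binsum_recl ffcons0.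
by congr ((_ + _) / _); apply: eq_bigr => i _; rewrite ffunE liftK.
Qed.

Lemma NN_succ m :
  NN p q m.+1 = (\sum_(d : Dt p q) \sum_(d' : Dt p q) NN_shift m (ssval d' - ssval d))%N.
Proof.
rewrite /NN (card_pairs (fun a b => dval a == dval b)) big_ffun_cons.
apply: eq_bigr => d _; rewrite exchange_big big_ffun_cons.
apply: eq_bigr => d' _; rewrite /NN_shift (card_pairs (fun a b => dval a == dval b + _)).
rewrite exchange_big; apply: eq_bigr => a _; apply: eq_bigr => b _.
by rewrite !dval_cons; congr nat_of_bool; apply/eqP/eqP => E; lra.
Qed.

Lemma NN_succ_le m :
  (NN p q m.+1 <= \sum_(x <- digits p q) \sum_(y <- digits p q) NN_shift m (y - x))%N.
Proof.
rewrite NN_succ; apply: leq_trans (sum_seq_sub_le _ _); apply: leq_sum => d _.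
exact: (sum_seq_sub_le _ (fun y => NN_shift m (y - ssval d))).
Qed.

Hypothesis r01 : 0 <= r <= 1.

Lemma digit01 (d : Dt p q) : 0 <= ssval d <= 1.
Proof. by have := ssvalP d; rewrite !inE => /or3P[] /eqP ->; rewrite ?lexx ?ler01. Qed.

Lemma dval01 m (a : word m) : 0 <= dval a < 1.
Proof. exact: (binsum_ge0_lt1 (fun i => digit01 (a i))). Qed.

Lemma NN_shift_eq0 m t : (t <= -1) || (1 <= t) -> NN_shift m t = 0%N.
Proof.
move=> t_out; apply: eq_card0 => -[a b]; rewrite !inE /=; apply/negP => /eqP E.
by have := dval01 a; have := dval01 b; case/orP: t_out; lra.
Qed.

Lemma NN_shift_pair_le m t : 0 <= t <= 1 ->
  (NN_shift m t + NN_shift m (t - 1) <= NN p q m)%N.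
Proof.
move=> t01; pose rotate v := if v + t < 1 then v + t else v + t - 1.
have rotate_inj : {in values (@dval p q m) &, injective rotate}.
  move=> _ _ /[!mem_undup] /codomP[a ->] /codomP[b ->]; rewrite /rotate.
  by have := dval01 a; have := dval01 b; do 2 case: ifP; lra.
apply: leq_trans (card_graph_pairs_le rotate_inj); rewrite leq_eqVlt; apply/orP; left.
rewrite /NN_shift (card_pairs (fun a b => dval a == dval b + t)).
rewrite (card_pairs (fun a b => dval a == dval b + (t - 1))).
rewrite (card_pairs (fun a b => dval a == rotate (dval b))) -big_split.
apply/eqP/eq_bigr => a _; rewrite -big_split; apply: eq_bigr => b _ /=.
have := dval01 a; have := dval01 b; rewrite /rotate addrA; case: ifP => ? ? ?.
  by case: (eqVneq (dval a) (dval b + t - 1)) => [?|_]; [exfalso; lra | rewrite addn0].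
by case: (eqVneq (dval a) (dval b + t)) => [?|_]; [exfalso; lra | rewrite add0n].
Qed.

Lemma NN_succ_le5 m : (NN p q m.+1 <= 5 * NN p q m)%N.
Proof.
apply: leq_trans (NN_succ_le m) _.
rewrite /digits !big_cons !big_nil !addn0 !subrr !subr0 !sub0r !NN_shift0.
rewrite (@NN_shift_eq0 m 1) ?lexx ?orbT // (@NN_shift_eq0 m (-1)) ?lexx //.
have r'01 : 0 <= 1 - r <= 1 by case/andP: r01 => r0 r1; apply/andP; split; lra.
have := NN_shift_pair_le m r01.
have := NN_shift_pair_le m r'01; rewrite addrAC subrr add0r.
move: (NN_shift m r) (NN_shift m (r - 1)) (NN_shift m (- r)) (NN_shift m (1 - r)).
move: (NN p q m); lia.
Qed.

Hypothesis q_gt0 : (0 < q)%N.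

Lemma binsum_digits_num m (c : 'I_m -> rat) : (forall i, c i \in digits p q) ->
  exists u x, (x < 2 ^ m)%N /\
    q%:R * 2 ^+ m * binsum c = q%:R * u%:R + p%:R * x%:R.
Proof.
have q_neq0 : q%:R != 0 :> rat by rewrite pnatr_eq0 -lt0n.
elim: m c => [|m IHm] c c_dig.
  by exists 0%N, 0%N; rewrite /binsum big_ord0 !mulr0 addr0.
have [u [x [x_lt E]]] := IHm _ (fun i => c_dig (lift ord0 i)).
rewrite binsum_recl exprS; move: E; set B := binsum _ => E.
have := c_dig ord0; rewrite !inE => /or3P[] /eqP ->.
- exists u, x; split; first by rewrite expnS; lia.
  by rewrite -E; field.
- exists (u + 2 ^ m)%N, x; split; first by rewrite expnS; lia.
  by rewrite natrD natrX mulrDr -addrAC -E; field.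
- exists u, (x + 2 ^ m)%N; split; first by rewrite expnS; lia.
  by rewrite natrD natrX mulrDr addrA -E; field.
Qed.

Lemma dval_shift_neq m (a b : word m) (j : nat) :
  coprime p q -> (2 ^ m.+1 <= q)%N -> dval a + j%:R != dval b + r.
Proof.
move=> co_pq q_big; apply/eqP => E.
have q_neq0 : q%:R != 0 :> rat by rewrite pnatr_eq0 -lt0n.
have [ua [xa [xa_lt Ea]]] := binsum_digits_num (fun i => ssvalP (a i)).
have [ub [xb [xb_lt Eb]]] := binsum_digits_num (fun i => ssvalP (b i)).
rewrite /binsum /= -/(dval a) -/(dval b) in Ea Eb.
have E_nat : ((ua + j * 2 ^ m) * q + p * xa = ub * q + p * (xb + 2 ^ m))%N.
  apply/eqP; rewrite -(eqr_nat rat) !(natrD, natrM, natrX); apply/eqP.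
  have := congr1 (fun v => q%:R * 2 ^+ m * v) E; rewrite /= !mulrDr Ea Eb.
  have -> : q%:R * 2 ^+ m * r = p%:R * 2 ^+ m by field.
  move=> h; lra.
have : p * (xb + 2 ^ m) = p * xa %[mod q].
  by rewrite -(modnMDl ub) -E_nat modnMDl.
move/eqP; rewrite eqn_mod_dvd; last by rewrite leq_mul2l; apply/orP; right; lia.
rewrite -mulnBr Gauss_dvdr 1?coprime_sym // => /dvdn_leq.
by rewrite expnS in q_big; lia.
Qed.

Lemma NN_shift_digit_eq0 m (j : nat) : coprime p q -> (2 ^ m.+1 <= q)%N ->
  NN_shift m (r - j%:R) = 0%N /\ NN_shift m (j%:R - r) = 0%N.
Proof.
move=> co_pq q_big; split; apply: eq_card0 => -[a b]; rewrite !inE /=.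
  by apply: contraNF (dval_shift_neq a b j co_pq q_big) => /eqP->; apply/eqP; ring.
by apply: contraNF (dval_shift_neq b a j co_pq q_big) => /eqP->; apply/eqP; ring.
Qed.

Lemma NN_succ_le3 m : coprime p q -> (2 ^ m.+1 <= q)%N ->
  (NN p q m.+1 <= 3 * NN p q m)%N.
Proof.
move=> co_pq q_big; apply: leq_trans (NN_succ_le m) _.
rewrite /digits !big_cons !big_nil !addn0.
have [-> ->] := NN_shift_digit_eq0 0 co_pq q_big.
have [-> ->] := NN_shift_digit_eq0 1 co_pq q_big.
rewrite !subrr !subr0 !sub0r !NN_shift0.
by rewrite (@NN_shift_eq0 m 1) ?lexx ?orbT // (@NN_shift_eq0 m (-1)) ?lexx //; lia.
Qed.

End Digits.

Lemma NN_gt0 p q m : (0 < NN p q m)%N.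
Proof.
pose a : {ffun 'I_m -> Dt p q} := [ffun=> SeqSub (mem_head 0 _)].
by apply/card_gt0P; exists (a, a); rewrite inE.
Qed.

Lemma limn_esup_ge (R : realType) (u : (\bar R)^nat) (l : \bar R) :
  (\forall n \near \oo%classic, l <= u n)%E -> (l <= limn_esup u)%E.
Proof.
move=> u_ge; rewrite limn_esup_lim; apply: lime_ge; first exact: is_cvg_esups.
near=> n; apply: le_trans (_ : u n <= _)%E; first by near: n.
by apply: ereal_sup_ubound; exists n => /=.
Unshelve. all: by end_near.
Qed.

Section Matrices.

Variable R : realType.

Lemma mulmx_ge0 m n k (A : 'M[R]_(m, n)) (B : 'M[R]_(n, k)) :
  (forall i j, 0 <= A i j) -> (forall i j, 0 <= B i j) ->
  forall i j, 0 <= (A *m B) i j.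
Proof. by move=> A0 B0 i j; rewrite mxE; apply: sumr_ge0 => l _; rewrite mulr_ge0. Qed.

Lemma Amat_ge0 z i j : 0 <= Amat R z i j.
Proof.
case: z => [[] []]; rewrite mxE;
by case: i => [[|[|[|[|i]]]] Hi] //=; case: j => [[|[|[|[|j]]]] Hj] //=; lra.
Qed.

Lemma Amat_colsum_ge2 z k : 2 <= \sum_j Amat R z j k.
Proof.
rewrite !big_ord_recl big_ord0.
by case: z => [[] []]; rewrite !mxE; case: k => [[|[|[|[|k]]]] Hk] //=; lra.
Qed.

Lemma Aprod_ge0 z a b i j : 0 <= Aprod R z a b i j.
Proof.
elim/big_ind: (Aprod R z a b) i j => [i j|A B|k _]; last exact: Amat_ge0.
  by rewrite mxE; case: (i == j).
exact: mulmx_ge0.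
Qed.

Lemma Aprod_recl z a b : (a < b)%N -> Aprod R z a b = Amat R (z a) *m Aprod R z a.+1 b.
Proof. by move=> ab; rewrite /Aprod big_ltn. Qed.

Lemma colsum0_mul_ge (c : R) (A M : 'M[R]_4) :
  (forall k, c <= \sum_j A j k) -> (forall i, 0 <= M i 0) ->
  c * colsum0 M <= colsum0 (A *m M).
Proof.
move=> Ac M0; rewrite /colsum0 mulr_sumr.
under [leRHS]eq_bigr do rewrite mxE.
rewrite exchange_big /=; apply: ler_sum => k _.
by rewrite -mulr_suml ler_wpM2r.
Qed.

Lemma colsum0_Aprod_ge1 z k a : 1 <= colsum0 (Aprod R z a (a + k)).
Proof.
elim: k a => [|k IHk] a.
  rewrite /colsum0 /Aprod addn0 big_geq // (bigD1 ord0) //= big1 ?addr0 => [|i i0].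
    by rewrite mxE.
  by rewrite mxE; case: i i0 => [[|k] ?].
rewrite Aprod_recl ?addnS ?ltnS ?leq_addr // -addSn.
apply: le_trans (colsum0_mul_ge (Amat_colsum_ge2 _) (fun i => Aprod_ge0 _ _ _ i 0)).
by have := IHk a.+1; lra.
Qed.

Lemma phi_ge_ln2 z : ((ln 2 : R)%:E <= phi R z)%E.
Proof.
apply: limn_esup_ge; near=> k; rewrite lee_fin.
have k_gt0 : (0 < k)%N by near: k; exists 1%N.
have den_ge1 := colsum0_Aprod_ge1 z k.-1 1.
rewrite add1n prednK // in den_ge1.
have num_ge := colsum0_mul_ge (Amat_colsum_ge2 (z 0%N)) (fun i => Aprod_ge0 z 1 k i 0).
rewrite Aprod_recl // ler_ln ?posrE ?divr_gt0 ?ler_pdivlMr //; lra.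
Unshelve. all: by end_near.
Qed.

Local Notation zeros := (fun=> (false, false) : B).

Lemma Aprod_zeros_col k a (i : 'I_4) :
  Aprod R zeros a (a + k) i 0 = 3 ^+ k * (i == 0)%:R.
Proof.
elim: k a i => [|k IHk] a i; first by rewrite /Aprod addn0 big_geq // mxE mul1r.
rewrite Aprod_recl ?addnS ?ltnS ?leq_addr // -addSn mxE.
rewrite big_ord_recl big1 => [|j _]; last by rewrite IHk mulr0 mulr0.
rewrite IHk mulr1 addr0 exprS mxE.
by case: i => [[|[|[|[|i]]]] ?] /=; rewrite ?mulr0 ?mulr1 ?mul0r.
Qed.

Lemma phi_zeros_ge_ln3 : ((ln 3 : R)%:E <= phi R zeros)%E.
Proof.
have colsum k a : colsum0 (Aprod R zeros a (a + k)) = 3 ^+ k.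
  by rewrite /colsum0 !big_ord_recl big_ord0 !Aprod_zeros_col /=; lra.
apply: limn_esup_ge; near=> k; rewrite lee_fin.
have k_gt0 : (0 < k)%N by near: k; exists 1%N.
by rewrite -(add0n k) colsum -(prednK k_gt0) -add1n colsum exprS mulfK.
Unshelve. all: by end_near.
Qed.

End Matrices.

Lemma Zset_zeros p q n : [ffun=> (false, false)] \in Zset p q n.
Proof. by rewrite inE !big1 ?mulr0 ?subrr // => i _; rewrite ffunE mul0r. Qed.

Lemma Zset_has_nonzero p q n : (p <= q)%N -> (0 < q)%N -> (q < 2 ^ n)%N ->
  exists2 x, x \in Zset p q n & x != [ffun=> (false, false)].
Proof.
move=> pq q_gt0 q_lt.
have [bq Ebq] := binsum_bits q_lt.
have [bp Ebp] := binsum_bits (leq_ltn_trans pq q_lt).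
pose x : {ffun 'I_n -> B} := [ffun i => (bq i, bp i)].
have xE i : x i = (bq i, bp i) by rewrite ffunE.
exists x.
  rewrite inE; under eq_bigr do rewrite xE; under [X in _ - _ * X]eq_bigr do rewrite xE.
  by rewrite -!/(binsum _) Ebq Ebp mulrCA subrr.
apply: contraTneq q_gt0 => /ffunP bq0.
have : binsum (fun i => (bq i)%:R) = 0.
  by rewrite /binsum big1 // => i _; have := bq0 i; rewrite xE ffunE => -[->]; rewrite mul0r.
by rewrite Ebq => /eqP; rewrite mulf_eq0 invr_eq0 expf_eq0 pnatr_eq0 andbF orbF => /eqP->.
Qed.

Definition cyl_ext n (x : {ffun 'I_n -> B}) : nat -> B :=
  fun k => if insub k is Some i then x i else (false, false).

Lemma cyl_ext_in n (x : {ffun 'I_n -> B}) : cyl x (cyl_ext x).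
Proof. by move=> i; rewrite /cyl_ext valK. Qed.

Lemma ln_ratio_le (R : realType) (N N' c : nat) : (0 < N)%N -> (0 < N')%N ->
  (N <= c * N')%N -> ln (N%:R / N'%:R : R) <= ln c%:R.
Proof.
move=> N_gt0 N'_gt0 le_N; have c_gt0 : (0 < c)%N by case: c le_N; rewrite ?mul0n; lia.
by rewrite ler_ln ?posrE ?divr_gt0 ?ltr0n // ler_pdivrMr ?ltr0n // -natrM ler_nat.
Qed.

Lemma le_ereal_sup_phi_cyl (R : realType) n (x : {ffun 'I_n -> B}) (y : nat -> B)
    (l : \bar R) :
  cyl x y -> (l <= phi R y)%E -> (l <= ereal_sup [set phi R y | y in cyl x])%E.
Proof. by move=> xy /le_trans; apply; apply: ereal_sup_ubound; exists y. Qed.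

Unset Implicit Arguments.

Theorem theorem7p6 (R : realType) (p q : nat) (n : nat)
  (hq : (0 < q)%N) (hcop : coprime p q)
  (hpq : 0 <= p%:Q / q%:Q <= 1) (hn : (2 <= n)%N) :
  ((ln ((NN p q n)%:R / (NN p q n.-1)%:R : R))%:E <=
   \sum_(x in Zset p q n) ereal_sup [set phi R y | y in cyl x])%E.
Proof.
case: n hn => [//|m] _; rewrite succnK.
set f := fun x : {ffun 'I_m.+1 -> B} => ereal_sup [set phi R y | y in cyl x].
have f_ge_ln2 x : ((ln 2 : R)%:E <= f x)%E.
  exact: le_ereal_sup_phi_cyl (cyl_ext_in x) (phi_ge_ln2 R _).
have f_ge0 x : (0 <= f x)%E.
  by apply: le_trans (f_ge_ln2 x); rewrite lee_fin ln_ge0 // ler1n.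
have f0_ge_ln3 : ((ln 3 : R)%:E <= f [ffun=> (false, false)])%E.
  by apply: (le_ereal_sup_phi_cyl _ (phi_zeros_ge_ln3 R)) => i; rewrite ffunE.
have ratio_le c : (NN p q m.+1 <= c * NN p q m)%N ->
    ((ln ((NN p q m.+1)%:R / (NN p q m)%:R : R))%:E <= (ln c%:R)%:E)%E.
  by move=> le_N; rewrite lee_fin ln_ratio_le ?NN_gt0.
rewrite (bigD1 _ (Zset_zeros p q m.+1)) /=.
have [q_big | q_small] := leqP (2 ^ m.+1) q.
  apply: le_trans (leeDl _ (sume_ge0 (fun x _ => f_ge0 x) _)).
  exact: le_trans (ratio_le 3%N (NN_succ_le3 hpq hq hcop q_big)) f0_ge_ln3.
have p_le_q : (p <= q)%N.
  by case/andP: hpq => _; rewrite ler_pdivrMr ?ltr0n // mul1r ler_nat.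
have [x1 x1_Z x1_neq0] := Zset_has_nonzero p_le_q hq q_small.
rewrite (bigD1 x1) /=; last exact/andP.
apply: le_trans (leeD f0_ge_ln3 (leeD (f_ge_ln2 x1) (sume_ge0 (fun x _ => f_ge0 x) _))).
rewrite adde0 -EFinD -lnM ?posrE // -natrM.
apply: ratio_le; apply: leq_trans (NN_succ_le5 hpq m) _.
by rewrite leq_mul2r leqnSn orbT.
Qed.
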